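(* Let $k\ge1$ be an integer and for $\mathbf{x}=(x_1,\dots,x_k)$ with $x_i\ge 1$ and $\mathbf{y}=(y_1,\dots,y_k)$ with $y_i\ge 0$, not all zero, define $$G(\mathbf{x},\mathbf{y})=\frac{\sum_{i=1}^k y_i\left(1-\frac{1}{x_i}\right)}{\sum_{i=1}^k y_i\prod_{j=i+1}^k x_j}.$$ Then $\min_{\mathbf{y}}\sup_{\mathbf{x}}G(\mathbf{x},\mathbf{y})=\frac{1}{k}$.
   Context: The empty product (for $i=k$) equals $1$. *)

(* real numbers. Vectors x = (x_1..x_k) are encoded as
   functions nat -> R, with x_i stored at index i-1 (indices 0..k-1). *)
From Stdlib Require Import Reals.
Open Scope R_scope.

Fixpoint sumR (n : nat) (f : nat -> R) : R :=
  match n with O => 0 | S m => sumR m f + f m end.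

Fixpoint prodR (n : nat) (f : nat -> R) : R :=
  match n with O => 1 | S m => prodR m f * f m end.

(* With 0-based index i (paper's index i+1), prod_{j=i+1}^{k} x_j in
   1-based indexing is the product of x over 0-based indices i+1..k-1. *)
Definition tail_prod (k : nat) (x : nat -> R) (i : nat) : R :=
  prodR (k - S i) (fun m => x (S i + m)%nat).

Definition G (k : nat) (x y : nat -> R) : R :=
  sumR k (fun i => y i * (1 - / x i)) /
  sumR k (fun i => y i * tail_prod k x i).

Definition adm_x (k : nat) (x : nat -> R) : Prop :=
  forall i, (i < k)%nat -> 1 <= x i.

Definition adm_y (k : nat) (y : nat -> R) : Prop :=
  (forall i, (i < k)%nat -> 0 <= y i) /\ (exists i, (i < k)%nat /\ y i <> 0).

Definition Gvals (k : nat) (y : nat -> R) : R -> Prop :=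
  fun g => exists x, adm_x k x /\ g = G k x y.

From Stdlib Require Import Reals Lra Lia.
Open Scope R_scope.

(* Proof of min_y sup_x G(x,y) = 1/k.  Indices are 0-based: the paper's x_(i+1)
   is [x i], and P_i = tail_prod k x i is the product of the x_j with j > i.

   Upper bound, at the weights y_i = i+1.  We show
     k * sum_i (i+1)(1 - 1/x_i) <= sum_i (i+1) P_i,
   which is a weighted AM-GM inequality, proved with the tangent bound
   c ln (z/c) <= z - c.  It is applied once to z = (i+1) P_i (the "tail"
   terms) and once to z = (i+1)/x_i (the "head" terms); the logarithms of
   all these bounds add up to 0 (a telescoping sum plus an exchange of the
   order of summation in sum_i ln P_i), leaving exactly the inequality.

   Lower bound, for every admissible y.  Along the family x_0 = t,
   x_j = (j+1)/j (j >= 1), one computes G = 1/k - c/t with c >= 0, so every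
   upper bound of {G(x,y)} is >= 1/k. *)

Lemma sumR_ext n f g :
  (forall i, (i < n)%nat -> f i = g i) -> sumR n f = sumR n g.
Proof.
  induction n as [|n IH]; intros H; simpl; auto.
  rewrite IH by (intros; apply H; lia).
  rewrite H by lia; reflexivity.
Qed.

Lemma sumR_le n f g :
  (forall i, (i < n)%nat -> f i <= g i) -> sumR n f <= sumR n g.
Proof.
  induction n as [|n IH]; intros H; simpl; [lra|].
  assert (sumR n f <= sumR n g) by (apply IH; intros; apply H; lia).
  assert (f n <= g n) by (apply H; lia).
  lra.
Qed.

Lemma sumR_plus n f g : sumR n (fun i => f i + g i) = sumR n f + sumR n g.
Proof. induction n as [|n IH]; simpl; [ring | rewrite IH; ring]. Qed.

Lemma sumR_minus n f g : sumR n (fun i => f i - g i) = sumR n f - sumR n g.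
Proof. induction n as [|n IH]; simpl; [ring | rewrite IH; ring]. Qed.

Lemma sumR_scal n c f : sumR n (fun i => c * f i) = c * sumR n f.
Proof. induction n as [|n IH]; simpl; [ring | rewrite IH; ring]. Qed.

Lemma sumR_const n c : sumR n (fun _ => c) = INR n * c.
Proof.
  induction n as [|n IH]; simpl sumR; [simpl; ring|].
  rewrite IH, S_INR; ring.
Qed.

Lemma sumR_telescope n f : sumR n (fun i => f (S i) - f i) = f n - f 0%nat.
Proof. induction n as [|n IH]; simpl; [ring | rewrite IH; ring]. Qed.

(* Exchanging the order of summation: summing the tail sums
   sum_{i<j<k} L_j over i counts each L_j exactly j times. *)
Lemma sumR_tail_sums k L :
  sumR k (fun i => sumR (k - S i) (fun m => L (S i + m)%nat)) =
  sumR k (fun i => INR i * L i).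
Proof.
  induction k as [|k IH]; [reflexivity|].
  cbn [sumR]. rewrite Nat.sub_diag; cbn [sumR].
  rewrite (sumR_ext k _ (fun i => sumR (k - S i) (fun m => L (S i + m)%nat) + L k)).
  - rewrite sumR_plus, IH, sumR_const; ring.
  - intros i Hi. replace (S k - S i)%nat with (S (k - S i)) by lia.
    simpl. do 2 f_equal. lia.
Qed.

Lemma sumR_nonneg n f : (forall i, (i < n)%nat -> 0 <= f i) -> 0 <= sumR n f.
Proof.
  intros H. rewrite <- (Rmult_0_r (INR n)), <- sumR_const.
  apply sumR_le; auto.
Qed.

Lemma sumR_pos n f :
  (forall i, (i < n)%nat -> 0 <= f i) ->
  (exists i, (i < n)%nat /\ 0 < f i) -> 0 < sumR n f.
Proof.
  induction n as [|n IH]; intros H [j [Hj Hfj]]; [lia|]; simpl.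
  assert (0 <= sumR n f) by (apply sumR_nonneg; intros; apply H; lia).
  assert (0 <= f n) by (apply H; lia).
  destruct (Nat.eq_dec j n) as [->|Hne]; [lra|].
  assert (0 < sumR n f) by (apply IH; [intros; apply H; lia | exists j; split; [lia | auto]]).
  lra.
Qed.

Lemma prodR_ge1 n f : (forall i, (i < n)%nat -> 1 <= f i) -> 1 <= prodR n f.
Proof.
  induction n as [|n IH]; intros H; simpl; [lra|].
  assert (1 <= prodR n f) by (apply IH; intros; apply H; lia).
  assert (1 <= f n) by (apply H; lia).
  nra.
Qed.

Lemma prodR_pos n f : (forall i, (i < n)%nat -> 0 < f i) -> 0 < prodR n f.
Proof.
  induction n as [|n IH]; intros H; simpl; [lra|].
  assert (0 < prodR n f) by (apply IH; intros; apply H; lia).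
  assert (0 < f n) by (apply H; lia).
  nra.
Qed.

Lemma ln_prodR n f :
  (forall i, (i < n)%nat -> 0 < f i) -> ln (prodR n f) = sumR n (fun i => ln (f i)).
Proof.
  induction n as [|n IH]; intros H; simpl; [apply ln_1|].
  assert (0 < prodR n f) by (apply prodR_pos; intros; apply H; lia).
  assert (0 < f n) by (apply H; lia).
  rewrite ln_mult, IH by (auto; intros; apply H; lia); reflexivity.
Qed.

(* The tangent-line bound for the logarithm, ln z <= z - 1, scaled by c > 0. *)
Lemma ln_tangent c z : 0 < c -> 0 < z -> c * ln (z / c) <= z - c.
Proof.
  intros Hc Hz.
  assert (Hzc : 0 < z / c) by (apply Rdiv_lt_0_compat; lra).
  pose proof (exp_ineq1_le (ln (z / c))) as He.
  rewrite exp_ln in He by exact Hzc.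
  apply (Rmult_le_compat_l c) in He; [|lra].
  replace (c * (z / c)) with z in He by (field; lra).
  lra.
Qed.

Section UpperBound.
Variable k : nat.
Hypothesis hk : (1 <= k)%nat.
Variable x : nat -> R.
Hypothesis hx : adm_x k x.

Let P (i : nat) : R := tail_prod k x i.

Lemma tail_prod_ge1 i : 1 <= P i.
Proof. apply prodR_ge1; intros; apply hx; lia. Qed.

Lemma ln_tail_prod i :
  (i < k)%nat -> ln (P i) = sumR (k - S i) (fun m => ln (x (S i + m)%nat)).
Proof.
  intros Hi. apply ln_prodR. intros m Hm.
  assert (1 <= x (S i + m)%nat) by (apply hx; lia). lra.
Qed.

(* Tangent bound at z = (i+1) P_i with c = k. *)
Lemma tail_term_bound i :
  INR k * (ln (INR i + 1) + ln (P i) - ln (INR k)) <= (INR i + 1) * P i - INR k.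
Proof.
  assert (Hk : 0 < INR k) by (apply lt_0_INR; lia).
  assert (Hi : 0 < INR i + 1) by (pose proof (pos_INR i); lra).
  pose proof (tail_prod_ge1 i) as HP.
  pose proof (ln_tangent (INR k) ((INR i + 1) * P i) Hk ltac:(nra)) as Ht.
  unfold Rdiv in Ht.
  rewrite ln_mult, ln_mult, ln_Rinv in Ht by
    (try apply Rinv_0_lt_compat; try apply Rmult_lt_0_compat; lra).
  lra.
Qed.

(* Tangent bound at z = (i+1)/x_i with c = i (trivial for i = 0). *)
Lemma head_term_bound i :
  (i < k)%nat ->
  (INR i + 1) * ln (INR i + 1) - INR i * ln (INR i) - ln (INR i + 1)
    - INR i * ln (x i) <= (INR i + 1) / x i - INR i.
Proof.
  intros Hik.
  assert (Hx : 1 <= x i) by (apply hx; lia).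
  assert (Hxi : 0 < / x i) by (apply Rinv_0_lt_compat; lra).
  destruct i as [|i'].
  - simpl INR. rewrite Rplus_0_l, ln_1.
    assert (0 < 1 / x 0%nat) by (unfold Rdiv; lra). lra.
  - assert (Hi : 0 < INR (S i')) by (apply lt_0_INR; lia).
    set (i := S i') in *.
    pose proof (ln_tangent (INR i) ((INR i + 1) / x i) Hi
                  ltac:(apply Rdiv_lt_0_compat; lra)) as Ht.
    unfold Rdiv in Ht.
    rewrite ln_mult, ln_mult, ln_Rinv, ln_Rinv in Ht by
      (try apply Rinv_0_lt_compat; try apply Rmult_lt_0_compat; lra).
    unfold Rdiv. lra.
Qed.

(* The logarithms of all tangent bounds add up to zero. *)
Lemma log_terms_cancel :
  sumR k (fun i => (ln (INR i + 1) + ln (P i) - ln (INR k)) +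
    ((INR i + 1) * ln (INR i + 1) - INR i * ln (INR i) - ln (INR i + 1)
      - INR i * ln (x i))) = 0.
Proof.
  rewrite (sumR_ext k _ (fun i =>
      ((INR (S i) * ln (INR (S i)) - INR i * ln (INR i))
        + sumR (k - S i) (fun m => ln (x (S i + m)%nat)))
      - (ln (INR k) + INR i * ln (x i)))).
  - rewrite sumR_minus, sumR_plus, sumR_plus, sumR_const,
      (sumR_telescope k (fun i => INR i * ln (INR i))),
      (sumR_tail_sums k (fun j => ln (x j))).
    simpl INR; ring.
  - intros i Hi. rewrite ln_tail_prod, S_INR by exact Hi. ring.
Qed.

Lemma weighted_amgm :
  INR k * sumR k (fun i => (INR i + 1) * (1 - / x i)) <=
  sumR k (fun i => (INR i + 1) * P i).
Proof.
  assert (Hsum : INR k * 0 <=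
      sumR k (fun i => ((INR i + 1) * P i - INR k) +
                       INR k * ((INR i + 1) / x i - INR i))).
  { rewrite <- log_terms_cancel, <- sumR_scal. apply sumR_le. intros i Hi.
    pose proof (tail_term_bound i). pose proof (head_term_bound i Hi).
    assert (0 < INR k) by (apply lt_0_INR; lia). nra. }
  rewrite sumR_plus, sumR_minus, sumR_scal, sumR_minus, sumR_const in Hsum.
  rewrite (sumR_ext k _ (fun i => INR i + 1 - (INR i + 1) / x i)) by
    (intros; unfold Rdiv; ring).
  assert (Hw : sumR k (fun i => INR i + 1) = sumR k INR + INR k).
  { rewrite (sumR_plus k INR (fun _ => 1)), sumR_const. ring. }
  rewrite sumR_minus, Hw.
  lra.
Qed.

Lemma G_upper_bound : G k x (fun i => INR i + 1) <= 1 / INR k.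
Proof.
  assert (Hk : 0 < INR k) by (apply lt_0_INR; lia).
  pose proof weighted_amgm as Hamgm.
  assert (HD : 0 < sumR k (fun i => (INR i + 1) * P i)).
  { apply sumR_pos.
    - intros i _. pose proof (pos_INR i). pose proof (tail_prod_ge1 i). nra.
    - exists 0%nat. split; [lia|]. pose proof (tail_prod_ge1 0). simpl; lra. }
  unfold G, P in *.
  set (N := sumR k (fun i => (INR i + 1) * (1 - / x i))) in *.
  set (D := sumR k (fun i => (INR i + 1) * tail_prod k x i)) in *.
  apply (Rmult_le_reg_r (INR k * D)); [nra|].
  replace (N / D * (INR k * D)) with (INR k * N) by (field; lra).
  replace (1 / INR k * (INR k * D)) with D by (field; lra).
  exact Hamgm.
Qed.

End UpperBound.

(* Lower bound.  The near-extremal points x_0 = t, x_j = (j+1)/j (j >= 1):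
   with x_0 -> infinity they make G approach 1/k for every y. *)

Definition extremal_x (t : R) : nat -> R :=
  fun j => match j with O => t | S _ => (INR j + 1) / INR j end.

Lemma extremal_x_adm k t : 1 <= t -> adm_x k (extremal_x t).
Proof.
  intros Ht [|j] _; cbn [extremal_x]; auto.
  assert (0 < INR (S j)) by (apply lt_0_INR; lia).
  apply (Rmult_le_reg_r (INR (S j))); auto.
  unfold Rdiv. rewrite Rmult_assoc, Rinv_l by lra. lra.
Qed.

Lemma extremal_tail_prod t k i :
  (i < k)%nat -> tail_prod k (extremal_x t) i = INR k / (INR i + 1).
Proof.
  intros Hi. unfold tail_prod.
  assert (Hprod : forall n, prodR n (fun m => extremal_x t (S i + m)%nat) =
                            (INR i + 1 + INR n) / (INR i + 1)).
  { assert (0 < INR i + 1) by (pose proof (pos_INR i); lra).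
    induction n as [|n IH]; cbn [prodR]; [simpl INR; field; lra|].
    rewrite IH. replace (S i + n)%nat with (S (i + n)) by lia. cbn [extremal_x].
    rewrite !S_INR, plus_INR. pose proof (pos_INR n). field. lra. }
  rewrite Hprod. f_equal.
  rewrite <- S_INR, <- plus_INR. f_equal. lia.
Qed.

Lemma G_extremal k y t :
  (1 <= k)%nat -> 0 < t ->
  G k (extremal_x t) y =
  (sumR k (fun i => y i / (INR i + 1)) - y 0%nat / t) /
  (INR k * sumR k (fun i => y i / (INR i + 1))).
Proof.
  intros hk ht. unfold G. f_equal.
  - rewrite (sumR_ext k _ (fun i => y i / (INR i + 1) -
               match i with O => y 0%nat / t | S _ => 0 end)).
    + (* only the i = 0 term carries the extra -y_0/t *)
      rewrite sumR_minus. f_equal.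
      destruct k as [|k']; [lia|]. clear hk.
      induction k' as [|k' IH]; simpl; [ring|]. simpl in IH. rewrite IH; ring.
    + intros [|i'] _; cbn [extremal_x].
      * simpl INR. field; lra.
      * assert (0 < INR (S i')) by (apply lt_0_INR; lia). field; lra.
  - rewrite <- sumR_scal. apply sumR_ext. intros i Hi.
    rewrite extremal_tail_prod by exact Hi.
    pose proof (pos_INR i). field; lra.
Qed.

Lemma le_of_le_minus_div a b c :
  0 <= c -> (forall t, 1 <= t -> a - c / t <= b) -> a <= b.
Proof.
  intros Hc H.
  destruct (Rle_or_lt a b) as [Hab|Hab]; auto.
  set (t := c / (a - b) + 1).
  assert (Hcd : 0 <= c / (a - b)) by (apply Rmult_le_pos; auto;
                                       apply Rlt_le, Rinv_0_lt_compat; lra).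
  specialize (H t ltac:(unfold t; lra)).
  assert (c / t < a - b).
  { apply (Rmult_lt_reg_r t); [unfold t; lra|].
    unfold t. field_simplify; [|lra|lra]. nra. }
  lra.
Qed.

Lemma sup_lower_bound k y :
  (1 <= k)%nat -> adm_y k y ->
  forall b, is_upper_bound (Gvals k y) b -> 1 / INR k <= b.
Proof.
  intros hk [hy0 [j [Hj Hyj]]] b Hb.
  assert (Hk : 0 < INR k) by (apply lt_0_INR; lia).
  set (Sy := sumR k (fun i => y i / (INR i + 1))).
  assert (HS : 0 < Sy).
  { apply sumR_pos.
    - intros i Hi. pose proof (pos_INR i).
      apply Rmult_le_pos; [apply hy0; auto | apply Rlt_le, Rinv_0_lt_compat; lra].
    - exists j. split; auto. pose proof (pos_INR j).
      assert (0 <= y j) by (apply hy0; auto). apply Rdiv_lt_0_compat; lra. }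
  assert (Hy0 : 0 <= y 0%nat) by (apply hy0; lia).
  apply (le_of_le_minus_div _ _ (y 0%nat / (INR k * Sy))).
  - apply Rmult_le_pos; [lra | apply Rlt_le, Rinv_0_lt_compat; nra].
  - intros t Ht.
    replace (1 / INR k - y 0%nat / (INR k * Sy) / t) with (G k (extremal_x t) y).
    + apply Hb. exists (extremal_x t). split; auto using extremal_x_adm.
    + rewrite G_extremal by (auto; lra). fold Sy. field. lra.
Qed.

Theorem theorem4 (k : nat) (hk : (1 <= k)%nat) :
  (exists y, adm_y k y /\ is_lub (Gvals k y) (1 / INR k)) /\
  (forall y, adm_y k y ->
     forall b, is_upper_bound (Gvals k y) b -> 1 / INR k <= b).
Proof.
  split; [|intros y hy; exact (sup_lower_bound k y hk hy)].
  assert (Hy : adm_y k (fun i => INR i + 1)).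
  { split.
    - intros i _. pose proof (pos_INR i). lra.
    - exists 0%nat. split; [lia | simpl; lra]. }
  exists (fun i => INR i + 1). split; [exact Hy | split].
  - intros g [x [hx ->]]. exact (G_upper_bound k hk x hx).
  - exact (sup_lower_bound k _ hk Hy).
Qed.
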